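(* A weighted pushdown system $\mathcal{A}$ has a good cycle (reachable from the initial configuration) if and only if its summary graph $\mathrm{Gr}(\mathcal{A})$ has a positive simple cycle (reachable from $(q_0,\bot)$).
   Context: A weighted pushdown system (WPS) is $\mathcal{A}=\langle Q,\Gamma,q_0,E,w\rangle$ with finite states $Q$, finite stack alphabet $\Gamma\ni\bot$ ($\bot$ never pushed or popped), edges $E\subseteq(Q\times\Gamma)\times(Q\times\mathrm{Com}(\Gamma))$, $\mathrm{Com}(\Gamma)=\{\mathit{skip},\mathit{pop}\}\cup\{\mathit{push}(z)\}$, weights $w:E\to\mathbb{Z}$; initial configuration $(\bot,q_0)$. Configurations $(\alpha,q)$, $\alpha\in\Gamma^+$; successor via an edge $(q,\mathrm{Top}(\alpha),q',\mathit{com})$ yields $(\mathit{com}(\alpha),q')$. A configuration $(\alpha_i,q_i)$ in a path is a local minimum if $\alpha_i$ is a prefix of all later stacks in the path. A good cycle is a finite path $\langle(\alpha_1,q_1),\dots,(\alpha_n,q_n)\rangle$ of positive weight whose first configuration is a local minimum, with $q_1=q_n$ and $\mathrm{Top}(\alpha_1)=\mathrm{Top}(\alpha_n)$. A path from $(\alpha\gamma,q_1)$ is non-decreasing if its first configuration is a local minimum. The summary function $s(q_1,\gamma,q_2)$ equals $\omega$ if non-decreasing paths from $(\bot\gamma,q_1)$ to $(\bot\gamma,q_2)$ of arbitrarily large weight exist, else the maximum weight of such a path, and $-\infty$ if none exists. The summary graph $\mathrm{Gr}(\mathcal{A})$ has vertices $Q\times\Gamma$ and edges: $((q_1,\gamma),(q_2,\gamma))$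 with weight $s(q_1,\gamma,q_2)$ whenever $s(q_1,\gamma,q_2)>-\infty$, and $((q_1,\gamma_1),(q_2,\gamma_2))$ with weight $w(e)$ for every edge $e=(q_1,\gamma_1,q_2,\mathit{push}(\gamma_2))\in E$. A simple cycle of $\mathrm{Gr}(\mathcal{A})$ is positive if it contains an edge of weight $\omega$ or its total weight is positive. *)

From HB Require Import structures.
From mathcomp Require Import all_boot all_order all_algebra.
Set Implicit Arguments. Unset Strict Implicit. Unset Printing Implicit Defensive.
Import Order.TTheory GRing.Theory Num.Theory.
Local Open Scope ring_scope.

Inductive com (G : Type) := Skip | Pop | Push of G.
Arguments Skip {G}. Arguments Pop {G}.

Record edge (Q G : Type) := Edge { esrc : Q; etop : G; edst : Q; ecom : com G }.

Record wps (Q G : finType) := WPS {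
  bot : G;
  q0 : Q;
  E : edge Q G -> bool;
  w : edge Q G -> int }.

Section WPS.
Variables (Q G : finType) (A : wps Q G).

Definition wf_wps : Prop :=
  forall e, E A e -> ecom e <> Push (bot A) /\ (etop e = bot A -> ecom e <> Pop).

(* Stacks are written bottom-first; the top is the last symbol. *)
Definition cfg := (seq G * Q)%type.
Definition top (s : seq G) : G := last (bot A) s.
Definition apply_com (c : com G) (s : seq G) : seq G :=
  match c with
  | Skip => s
  | Pop => take (size s).-1 s
  | Push z => rcons s z
  end.

Definition step (c : cfg) (e : edge Q G) (c' : cfg) : Prop :=
  [/\ E A e, esrc e = c.2, etop e = top c.1, edst e = c'.2 & c'.1 = apply_com (ecom e) c.1].

(* A path from c: the sequence of (edge taken, configuration reached). *)
Fixpoint is_run (c : cfg) (r : seq (edge Q G * cfg)) : Prop :=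
  match r with
  | [::] => True
  | (e, c') :: r' => step c e c' /\ is_run c' r'
  end.

Definition run_end (c : cfg) (r : seq (edge Q G * cfg)) : cfg := last c (map snd r).
Definition run_weight (r : seq (edge Q G * cfg)) : int := \sum_(p <- r) w A p.1.

Definition first_local_min (c : cfg) (r : seq (edge Q G * cfg)) : bool :=
  all (fun c' : cfg => prefix c.1 c'.1) (map snd r).

Definition init : cfg := ([:: bot A], q0 A).

Definition reachable (c : cfg) : Prop :=
  exists r, is_run init r /\ run_end init r = c.

Definition good_cycle (c : cfg) (r : seq (edge Q G * cfg)) : Prop :=
  [/\ is_run c r, 0 < run_weight r, first_local_min c r,
      (run_end c r).2 = c.2 & top (run_end c r).1 = top c.1].

Definition has_reachable_good_cycle : Prop :=
  exists c r, reachable c /\ good_cycle c r.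

Inductive ext := Omega | Fin of int.

Definition nd_path (q1 : Q) (g : G) (q2 : Q) (r : seq (edge Q G * cfg)) : Prop :=
  [/\ is_run ([:: bot A; g], q1) r, first_local_min ([:: bot A; g], q1) r
    & run_end ([:: bot A; g], q1) r = ([:: bot A; g], q2)].

(* summary_is q1 g q2 v  <->  s(q1, g, q2) = v  (and s(q1,g,q2) > -oo) *)
Definition summary_is (q1 : Q) (g : G) (q2 : Q) (v : ext) : Prop :=
  match v with
  | Omega => forall n : int, exists r, nd_path q1 g q2 r /\ n <= run_weight r
  | Fin m => (exists r, nd_path q1 g q2 r /\ run_weight r = m) /\
             (forall r, nd_path q1 g q2 r -> run_weight r <= m)
  end.

Definition gr_edge (u v : Q * G) (x : ext) : Prop :=
  (u.2 = v.2 /\ summary_is u.1 u.2 v.1 x) \/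
  (E A (Edge u.1 u.2 v.1 (Push v.2)) /\ x = Fin (w A (Edge u.1 u.2 v.1 (Push v.2)))).

Definition simple_cycle (vs : seq (Q * G)) (xs : seq ext) : Prop :=
  [/\ (0 < size vs)%N, size xs = size vs, uniq vs &
      forall i, (i < size vs)%N ->
        gr_edge (nth (q0 A, bot A) vs i) (nth (q0 A, bot A) vs (i.+1 %% size vs))
                (nth Omega xs i)].

Definition positive_cycle (xs : seq ext) : bool :=
  has (fun x => if x is Omega then true else false) xs ||
  (0 < \sum_(x <- xs) (if x is Fin m then m else 0)).

Inductive gr_reach : Q * G -> Q * G -> Prop :=
| gr_refl u : gr_reach u u
| gr_step u v z x : gr_edge u v x -> gr_reach v z -> gr_reach u z.

Definition has_reachable_positive_simple_cycle : Prop :=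
  exists vs xs, [/\ simple_cycle vs xs, positive_cycle xs &
                    exists2 v, v \in vs & gr_reach (q0 A, bot A) v].

End WPS.

From mathcomp Require Import all_boot all_order all_algebra.
From Stdlib Require Import Classical.
From mathcomp Require Import zify.
Set Implicit Arguments. Unset Strict Implicit. Unset Printing Implicit Defensive.
Import Order.TTheory GRing.Theory Num.Theory.
Local Open Scope ring_scope.

(* (=>) A non-decreasing run (one never going below its starting stack) is
   cut at its first return to the starting height, which is a non-decreasing
   path and so is dominated by a summary edge, or else starts with a push that
   is never popped, which is a push edge. Iterating gives a walk of Gr(A)
   between the (state, top) pairs of its ends, of weight at least that of the
   run ([run_to_walk]). Applied to the run reaching a good cycle and to the
   cycle itself, this yields a reachable closed walk of positive weight, and
   every such walk contains a positive simple cycle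
   ([positive_closed_walk_cycle]).
   (<=) Every edge of Gr(A) is realized by a non-decreasing run on top of any
   stack ([realize_edge]). Chaining these along a path to the cycle and then
   once around it, realizing omega edges by runs heavier than the total
   absolute finite weight of the cycle, gives a reachable good cycle.
   Runs are moved between stacks by replacing the part of the stack they
   never touch ([rebase_run]). *)

Lemma nth_belast (T : Type) (d u : T) (s : seq T) i :
  (i < size s)%N -> nth d (belast u s) i = nth d (u :: s) i.
Proof. by elim: s u i => // y s IH u [|i] //= Hi; rewrite IH. Qed.

Lemma nth_belast_succ (T : Type) (d u : T) (s : seq T) i :
  last u s = u -> (i < size s)%N -> nth d (belast u s) (i.+1 %% size s) = nth d s i.
Proof.
case/lastP: s => // s x; rewrite last_rcons size_rcons belast_rcons => -> Hi.
rewrite nth_rcons; case: ltngtP => [lt|gt|->].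
- by rewrite modn_small.
- by move: Hi; rewrite ltnS leqNgt gt.
- by rewrite modnn.
Qed.

Lemma last_take (T : Type) (d u : T) (s : seq T) k :
  (k <= size s)%N -> last u (take k s) = nth d (u :: s) k.
Proof. by elim: s u k => [|y s IH] u [|k] //= Hk; apply: IH. Qed.

Definition is_omega (x : ext) : bool := if x is Omega then true else false.
Definition fin_part (x : ext) : int := if x is Fin m then m else 0.

Definition ext_ge (x : ext) (m : int) : bool := is_omega x || (m <= fin_part x).

Definition ext_val (B : int) (x : ext) : int := if x is Fin m then m else B.

Lemma positive_cycleE (xs : seq ext) :
  positive_cycle xs = has is_omega xs || (0 < \sum_(x <- xs) fin_part x).
Proof. by []. Qed.

Lemma positive_cycle_split (xs1 xs2 xs3 : seq ext) :
  positive_cycle (xs1 ++ xs2 ++ xs3) -> positive_cycle xs2 \/ positive_cycle (xs1 ++ xs3).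
Proof.
rewrite !positive_cycleE !has_cat !big_cat /=.
case: (has is_omega xs1); first by right.
case: (has is_omega xs2); first by left.
case: (has is_omega xs3); first by right; rewrite orbT.
set a := \sum_(_ <- xs1) _; set b := \sum_(_ <- xs2) _; set c := \sum_(_ <- xs3) _.
rewrite /= => pos; have [|nonpos_b] := ltP 0 b; [by left | right].
by move: pos nonpos_b; lia.
Qed.

Lemma sum_fin_part_ge (xs : seq ext) :
  - \sum_(x <- xs) `|fin_part x| <= \sum_(x <- xs) fin_part x.
Proof. by rewrite -sumrN; apply: ler_sum => x _; exact: lerNnormlW. Qed.

Lemma sum_ext_val_ge (B : int) (xs : seq ext) : 0 <= B ->
  \sum_(x <- xs) fin_part x + (if has is_omega xs then B else 0) <= \sum_(x <- xs) ext_val B x.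
Proof.
move=> B0; elim: xs => [|y ys IH]; first by rewrite !big_nil.
rewrite !big_cons; move: IH; set b := if has is_omega ys then B else 0.
have b0 : 0 <= b by rewrite /b; case: (has _ _); rewrite ?lexx.
by case: y => [|m] /=; lia.
Qed.

Lemma positive_cycle_ext_val (xs : seq ext) :
  positive_cycle xs -> 0 < \sum_(x <- xs) ext_val (1 + \sum_(y <- xs) `|fin_part y|) x.
Proof.
set S := \sum_(y <- xs) `|fin_part y|; have S0 : 0 <= S by apply: sumr_ge0 => x _; exact: normr_ge0.
have B0 : 0 <= 1 + S by lia.
have := sum_ext_val_ge xs B0; have := sum_fin_part_ge xs.
rewrite positive_cycleE -/S; case: (has is_omega xs) => /=; lia.
Qed.

Lemma int_bounded_max (P : int -> Prop) (n m : int) :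
  (forall x, P x -> x < n) -> P m -> exists y, P y /\ forall x, P x -> x <= y.
Proof.
move=> bounded Pm; suff: forall k : nat, forall m, P m -> n - m <= k%:Z ->
    exists y, P y /\ forall x, P x -> x <= y.
  by move=> /(_ `|n - m|%N m Pm); apply; lia.
elim=> [|k IH] {Pm}m Pm Hk; first by have := bounded m Pm; lia.
case: (classic (exists x, P x /\ m < x)) => [[x [Px mx]]|no_larger].
  by apply: (IH x Px); lia.
exists m; split=> // x Px; rewrite leNgt; apply/negP => mx.
by apply: no_larger; exists x.
Qed.

Section Runs.
Variables (Q G : finType) (A : wps Q G).

Local Notation cfg := (cfg Q G).
Local Notation run := (seq (edge Q G * cfg)).

Definition stays_above (s : seq G) (r : run) : bool :=
  all (fun c : cfg => prefix s c.1) (map snd r).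

Lemma first_local_minE c (r : run) : first_local_min c r = stays_above c.1 r.
Proof. by []. Qed.

Lemma stays_above_cat s (r1 r2 : run) :
  stays_above s (r1 ++ r2) = stays_above s r1 && stays_above s r2.
Proof. by rewrite /stays_above map_cat all_cat. Qed.

Lemma stays_above_trans s s' (r : run) :
  prefix s s' -> stays_above s' r -> stays_above s r.
Proof. by move=> ss'; apply: sub_all => c /= /(prefix_trans ss'). Qed.

Lemma is_run_cat c (r1 r2 : run) :
  is_run A c (r1 ++ r2) <-> is_run A c r1 /\ is_run A (run_end c r1) r2.
Proof.
elim: r1 c => [|[e c'] r1 IH] c /=; first by tauto.
by rewrite IH /run_end /=; tauto.
Qed.

Lemma run_end_cat c (r1 r2 : run) :
  run_end c (r1 ++ r2) = run_end (run_end c r1) r2.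
Proof. by rewrite /run_end map_cat last_cat. Qed.

Lemma run_weight_cat (r1 r2 : run) :
  run_weight A (r1 ++ r2) = run_weight A r1 + run_weight A r2.
Proof. by rewrite /run_weight big_cat. Qed.

Lemma run_weight_cons p (r : run) : run_weight A (p :: r) = w A p.1 + run_weight A r.
Proof. by rewrite /run_weight big_cons. Qed.

Lemma run_weight_nil : run_weight A [::] = 0.
Proof. by rewrite /run_weight big_nil. Qed.

Lemma run_end_all (P : pred cfg) c (r : run) :
  P c -> all P (map snd r) -> P (run_end c r).
Proof. by elim: r c => //= [[e c']] r IH c _ /andP [Pc' /(IH c' Pc')]. Qed.

(* Stack commands only look at the top, so they act on the nonempty upper part. *)
Lemma apply_com_cat (c : com G) (s v : seq G) :
  v != [::] -> apply_com c (s ++ v) = s ++ apply_com c v.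
Proof.
case: c => [||z] //=; last by rewrite rcons_cat.
case: v => // y u _; rewrite take_cat size_cat /= addnS /= ltnNge leq_addr /=.
by rewrite addKn.
Qed.

Lemma top_cat_cons (s u : seq G) y : top A (s ++ y :: u) = last y u.
Proof. by rewrite /top last_cat. Qed.

Definition rebase (n : nat) (b : seq G) (c : cfg) : cfg := (b ++ drop n c.1, c.2).
Definition rebase_step n b (p : edge Q G * cfg) := (p.1, rebase n b p.2).

Lemma rebase_run (s b : seq G) g c (r : run) :
  prefix (rcons s g) c.1 -> stays_above (rcons s g) r ->
  is_run A c r -> is_run A (rebase (size s) b c) (map (rebase_step (size s) b) r).
Proof.
elim: r c => [|[e [st' q']] r IH] [st q] //=.
move=> /prefixP [t ->] /andP [/prefixP [t' /= Est'] above_r] [[Ee Hsrc Htop Hdst Hcom] run_r].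
split; last by apply: IH => //=; rewrite Est' prefix_prefix.
move: Htop Hcom; rewrite Est' /rebase /= !cat_rcons !drop_size_cat // top_cat_cons.
move=> Htop; rewrite apply_com_cat // => /(congr1 (drop (size s))).
rewrite !drop_size_cat // => Hcom.
by split=> //=; rewrite ?top_cat_cons // Hcom apply_com_cat.
Qed.

Lemma rebase_end n b c (r : run) :
  run_end (rebase n b c) (map (rebase_step n b) r) = rebase n b (run_end c r).
Proof.
by rewrite /run_end -map_comp (eq_map (_ : _ =1 rebase n b \o snd)) // map_comp last_map.
Qed.

Lemma rebase_weight n b (r : run) :
  run_weight A (map (rebase_step n b) r) = run_weight A r.
Proof. by rewrite /run_weight big_map. Qed.

Lemma rebase_stays_above (s b u : seq G) (r : run) :
  stays_above (s ++ u) r -> stays_above (b ++ u) (map (rebase_step (size s) b) r).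
Proof.
rewrite /stays_above -map_comp !all_map; apply: sub_all => -[e [st q]] /=.
by case/prefixP=> v ->; rewrite -catA drop_size_cat // catA prefix_prefix.
Qed.

End Runs.

Section Walks.
Variables (Q G : finType) (A : wps Q G).

Local Notation vertex := (Q * G)%type.
Local Notation cfg := (cfg Q G).
Local Notation run := (seq (edge Q G * cfg)).

(* Walks in Gr(A): the sequence of (vertex reached, weight of the edge used). *)
Fixpoint is_walk (u : vertex) (ps : seq (vertex * ext)) : Prop :=
  if ps is (v, x) :: ps' then gr_edge A u v x /\ is_walk v ps' else True.

Definition walk_end (u : vertex) (ps : seq (vertex * ext)) : vertex := last u (map fst ps).

Definition walk_weight (ps : seq (vertex * ext)) : int := \sum_(x <- map snd ps) fin_part x.

Definition walk_ge (ps : seq (vertex * ext)) (m : int) : bool :=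
  has is_omega (map snd ps) || (m <= walk_weight ps).

Lemma is_walk_cat u ps1 ps2 :
  is_walk u (ps1 ++ ps2) <-> is_walk u ps1 /\ is_walk (walk_end u ps1) ps2.
Proof. elim: ps1 u => [|[v x] ps1 IH] u /=; first by tauto. by rewrite IH /walk_end /=; tauto. Qed.

Lemma walk_end_cat u ps1 ps2 : walk_end u (ps1 ++ ps2) = walk_end (walk_end u ps1) ps2.
Proof. by rewrite /walk_end map_cat last_cat. Qed.

Lemma walk_ge_cons v x ps m1 m2 :
  ext_ge x m1 -> walk_ge ps m2 -> walk_ge ((v, x) :: ps) (m1 + m2).
Proof.
rewrite /ext_ge /walk_ge /walk_weight /= big_cons; case: (is_omega x) => //= Hx.
by case: (has _ _) => //= Hps; apply: lerD.
Qed.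

Lemma walk_ge_nil : walk_ge [::] 0.
Proof. by rewrite /walk_ge /walk_weight /= big_nil. Qed.

Lemma gr_reach_edge z u v x : gr_reach A z u -> gr_edge A u v x -> gr_reach A z v.
Proof.
elim=> [u' Huv|u' v' z' x' Hu'v' _ IH /IH]; first exact: gr_step Huv (gr_refl _ _).
exact: gr_step Hu'v'.
Qed.

Lemma gr_reach_walk z u ps : gr_reach A z u -> is_walk u ps -> gr_reach A z (walk_end u ps).
Proof.
elim: ps u => [|[v x] ps IH] u //= Hzu [Huv Hps].
exact: IH (gr_reach_edge Hzu Huv) Hps.
Qed.

Lemma walk_ge_positive ps (m : int) : 0 < m -> walk_ge ps m ->
  (0 < size ps)%N && positive_cycle (map snd ps).
Proof.
case: ps => [|p ps] m_pos; first by rewrite /walk_ge /walk_weight big_nil /= leNgt m_pos.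
by rewrite positive_cycleE /walk_ge; case: (has _ _) => //= /(lt_le_trans m_pos).
Qed.

Lemma summary_exists q1 g q2 (r : run) : nd_path A q1 g q2 r ->
  exists x, summary_is A q1 g q2 x /\ ext_ge x (run_weight A r).
Proof.
move=> Hr.
case: (classic (forall n : int, exists r, nd_path A q1 g q2 r /\ n <= run_weight A r)).
  by exists Omega.
move=> /not_all_ex_not [n Hn].
pose P m := exists r, nd_path A q1 g q2 r /\ run_weight A r = m.
have bounded x : P x -> x < n.
  by move=> [r' [Hr' <-]]; rewrite ltNge; apply/negP => Hle; apply: Hn; exists r'.
have [y [Py ymax]] := int_bounded_max bounded (ex_intro _ r (conj Hr erefl)).
exists (Fin y); split; first by split=> // r' Hr'; apply: ymax; exists r'.
by rewrite /ext_ge /=; apply: ymax; exists r.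
Qed.

End Walks.

Section RunToWalk.
Variables (Q G : finType) (A : wps Q G).

Local Notation cfg := (cfg Q G).
Local Notation run := (seq (edge Q G * cfg)).

Lemma step_above (p : seq G) z u q e c' :
  step A (p ++ z :: u, q) e c' -> c'.1 != p -> prefix (rcons p z) c'.1.
Proof.
case=> _ _ _ _ ->; rewrite apply_com_cat //.
case: (ecom e) => [||y] /=; rewrite -?cat_rcons ?prefix_prefix //.
by case: u => [|y u] /=; rewrite ?cats0 ?eqxx // -cat_rcons prefix_prefix.
Qed.

Lemma avoid_stays_above (p : seq G) z c (r : run) :
  is_run A c r -> prefix (rcons p z) c.1 ->
  all (fun c' : cfg => c'.1 != p) (map snd r) -> stays_above (rcons p z) r.
Proof.
elim: r c => //= [[e c']] r IH [st q] /= [Hs Hr] /prefixP [u Est] /andP [c'p avoid].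
rewrite Est cat_rcons in Hs.
have c'above := step_above Hs c'p.
by rewrite /stays_above /= c'above; exact: IH c' Hr c'above avoid.
Qed.

Lemma growing_step_push (p : seq G) q e c' :
  p != [::] -> step A (p, q) e c' -> prefix p c'.1 -> c'.1 != p ->
  exists z, ecom e = Push z /\ c'.1 = rcons p z.
Proof.
move=> p0 [_ _ _ _ ->]; case: (ecom e) => [||z] /=.
- by rewrite eqxx.
- move=> /size_prefix; rewrite size_takel ?leq_pred //.
  by case: p p0 => //= a p' _; rewrite ltnn.
- by exists z.
Qed.

(* r starts with a nonempty segment r1 simulated by an edge of Gr(A) from
   (q, g) to v, ending in a configuration with state v.1 and top v.2 from
   which the rest r2 of the run is non-decreasing. *)
Definition starts_with_edge (s : seq G) (g : G) (q : Q) (r : run) : Prop :=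
  exists r1 r2 s' v x,
    [/\ r = r1 ++ r2 /\ (0 < size r1)%N, gr_edge A (q, g) v x,
        run_end (rcons s g, q) r1 = (rcons s' v.2, v.1),
        stays_above (rcons s' v.2) r2 & ext_ge x (run_weight A r1)].

(* If r returns to the stack rcons s g, its first segment up to the return is
   a non-decreasing path: a summary edge of Gr(A). *)
Lemma returning_run_summary (s : seq G) (g : G) (q : Q) (r : run) :
  is_run A (rcons s g, q) r -> first_local_min (rcons s g, q) r ->
  has (fun p : edge Q G * cfg => p.2.1 == rcons s g) r -> starts_with_edge s g q r.
Proof.
move=> Hr Hmin /split_find found.
case: found Hr Hmin => -[e [st q']] r1 r2 /= /eqP -> _ Hr Hmin.
set r1' := rcons r1 _ in Hr Hmin *.
have [Hr1 _] := (is_run_cat A _ _ _).1 Hr.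
move: Hmin; rewrite first_local_minE stays_above_cat => /andP [Hmin1 Hmin2].
have end1 : run_end (rcons s g, q) r1' = (rcons s g, q') by rewrite /run_end map_rcons last_rcons.
have base : rebase (size s) [:: bot A] (rcons s g, q) = ([:: bot A; g], q).
  by rewrite /rebase /= -cats1 drop_size_cat.
have Hnd : nd_path A q g q' (map (rebase_step (size s) [:: bot A]) r1').
  split.
  - by rewrite -base; apply: (@rebase_run _ _ A s [:: bot A] g) => //; exact: prefix_refl.
  - by move: Hmin1; rewrite -cats1 => /(rebase_stays_above [:: bot A]).
  - by rewrite -base rebase_end end1 /rebase /= -cats1 drop_size_cat.
have [x [Hx Hge]] := summary_exists Hnd.
exists r1', r2, s, (q', g), x; split => //.
- by rewrite size_rcons.
- by left.
- by rewrite rebase_weight in Hge.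
Qed.

(* If r never comes back to the stack rcons s g, its first step pushes some z
   and the rest stays above rcons (rcons s g) z: a push edge of Gr(A). *)
Lemma avoiding_run_push (s : seq G) (g : G) (q : Q) (r : run) :
  (0 < size r)%N -> is_run A (rcons s g, q) r -> first_local_min (rcons s g, q) r ->
  ~~ has (fun p : edge Q G * cfg => p.2.1 == rcons s g) r -> starts_with_edge s g q r.
Proof.
case: r => [|[e [st q']] r] //= _ [Hs Hr].
rewrite first_local_minE /stays_above /= negb_or => /andP [grows _] /andP [moved avoid].
have nonempty : rcons s g != [::] by case: (s).
have [z [push_z Est]] := growing_step_push nonempty Hs grows moved.
rewrite /= in Est; subst st.
exists [:: (e, (rcons (rcons s g) z, q'))], r, (rcons s g), (q', z), (Fin (w A e)).
split => //.
- right; case: Hs => Ee Hsrc Htop Hdst _; rewrite /top last_rcons /= in Htop.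
  by case: e push_z Ee Hsrc Htop Hdst => a b c d /= -> Ee <- <- <-.
- apply: (avoid_stays_above Hr); first exact: prefix_refl.
  by move: avoid; rewrite -all_predC all_map; apply: sub_all => -[e' c'].
- by rewrite run_weight_cons run_weight_nil addr0 /ext_ge /= lexx.
Qed.

Lemma run_to_walk (r : run) (s : seq G) (g : G) (q : Q) :
  is_run A (rcons s g, q) r -> first_local_min (rcons s g, q) r ->
  exists ps, [/\ is_walk A (q, g) ps,
    walk_end (q, g) ps = ((run_end (rcons s g, q) r).2, top A (run_end (rcons s g, q) r).1)
    & walk_ge ps (run_weight A r)].
Proof.
have [n] := ubnP (size r); elim: n r s g q => // n IH r s g q /ltnSE size_r Hr Hmin.
have [/size0nil r0|r_nonempty] := posnP (size r).
  exists [::]; rewrite r0 run_weight_nil; split => //; last exact: walk_ge_nil.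
  by rewrite /walk_end /= /top last_rcons.
have [r1 [r2 [s' [[q' g'] [x [[Er size_r1] Hedge end1 Hmin2 Hge]]]]]] :
    starts_with_edge s g q r.
  have [returns|avoids] := boolP (has (fun p : edge Q G * cfg => p.2.1 == rcons s g) r).
  - exact: returning_run_summary.
  - exact: avoiding_run_push.
move: Hr; rewrite Er is_run_cat end1 => -[_ Hr2].
have size_r2 : (size r2 < n)%N by move: size_r; rewrite Er size_cat; lia.
have [ps [Hps ps_end ps_ge]] := IH r2 s' g' q' size_r2 Hr2 Hmin2.
exists (((q', g'), x) :: ps); split => //.
- by rewrite /walk_end /= -/(walk_end _ _) ps_end run_end_cat end1.
- by rewrite run_weight_cat; apply: walk_ge_cons.
Qed.

End RunToWalk.

Section Cycles.
Variables (Q G : finType) (A : wps Q G).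

Local Notation vertex := (Q * G)%type.
Local Notation root := (q0 A, bot A).

Definition closed_walk (u : vertex) (ps : seq (vertex * ext)) : Prop :=
  is_walk A u ps /\ walk_end u ps = u.

Definition walk_vertices (u : vertex) (ps : seq (vertex * ext)) : seq vertex :=
  belast u (map fst ps).

Lemma is_walk_nth d u ps i : is_walk A u ps -> (i < size ps)%N ->
  gr_edge A (nth d (u :: map fst ps) i) (nth d (map fst ps) i) (nth Omega (map snd ps) i).
Proof. by elim: ps u i => // [[v x]] ps IH u [|i] /= [Huv Hps] Hi //; apply: IH. Qed.

Lemma closed_walk_simple u ps : (0 < size ps)%N -> closed_walk u ps ->
  uniq (walk_vertices u ps) -> simple_cycle A (walk_vertices u ps) (map snd ps).
Proof.
rewrite /walk_vertices => ps0 [Hps closed] Huniq.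
split; rewrite ?size_belast ?size_map // => i Hi.
rewrite -(size_map fst ps) nth_belast_succ ?size_map // nth_belast ?size_map //.
exact: is_walk_nth.
Qed.

Lemma closed_walk_shortcut u ps : closed_walk u ps -> ~~ uniq (walk_vertices u ps) ->
  exists ps1 ps2 ps3, [/\ ps = ps1 ++ ps2 ++ ps3, (0 < size ps2)%N, (0 < size ps3)%N,
    closed_walk (walk_end u ps1) ps2 & closed_walk u (ps1 ++ ps3)].
Proof.
move=> [Hps closed] /(uniqPn u) [i [j [ij Hj Eij]]].
rewrite /walk_vertices size_belast size_map in Hj.
have Hi : (i < size ps)%N by apply: ltn_trans ij Hj.
rewrite !nth_belast ?size_map // in Eij.
have end_take k : (k <= size ps)%N -> walk_end u (take k ps) = nth u (u :: map fst ps) k.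
  by move=> Hk; rewrite /walk_end map_take (last_take u) // size_map.
have take_j : take j ps = take i ps ++ drop i (take j ps).
  by rewrite -{1}(cat_take_drop i (take j ps)) take_takel // ltnW.
have Eps : ps = take i ps ++ drop i (take j ps) ++ drop j ps.
  by rewrite catA -take_j cat_take_drop.
have end_i : walk_end u (take i ps) = walk_end u (take j ps).
  by rewrite !end_take ?Eij // ltnW.
have := Hps; rewrite {1}Eps !is_walk_cat -walk_end_cat -take_j -end_i => -[Hw1 [Hw2 Hw3]].
exists (take i ps), (drop i (take j ps)), (drop j ps); split => //.
- by rewrite size_drop size_takel ?subn_gt0 // ltnW.
- by rewrite size_drop subn_gt0.
- by split => //; rewrite -walk_end_cat -take_j end_i.
- split; first by rewrite is_walk_cat.
  by rewrite walk_end_cat end_i -walk_end_cat cat_take_drop.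
Qed.

Lemma positive_closed_walk_cycle u ps : (0 < size ps)%N -> closed_walk u ps ->
  positive_cycle (map snd ps) -> gr_reach A root u -> has_reachable_positive_simple_cycle A.
Proof.
have [n] := ubnP (size ps); elim: n u ps => // n IH u ps /ltnSE size_ps ps0 Hclosed Hpos Hu.
have [Huniq|repeats] := boolP (uniq (walk_vertices u ps)).
  exists (walk_vertices u ps), (map snd ps); split => //; first exact: closed_walk_simple.
  exists u => //; rewrite /walk_vertices.
  by case: ps ps0 {size_ps Hclosed Hpos Huniq} => //= -[v x] ps _; rewrite mem_head.
have [ps1 [ps2 [ps3 [Eps ps2_0 ps3_0 loop rest]]]] := closed_walk_shortcut Hclosed repeats.
move: Hpos size_ps; rewrite Eps !map_cat !size_cat => /positive_cycle_split[Hpos|Hpos] size_ps.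
- apply: (IH (walk_end u ps1) ps2) => //; first by move: size_ps ps3_0; lia.
  have [Hw _] := Hclosed; move: Hw; rewrite Eps => /is_walk_cat[Hw1 _].
  exact: gr_reach_walk Hu Hw1.
- apply: (IH u (ps1 ++ ps3)); rewrite ?map_cat ?size_cat //; move: size_ps ps2_0 ps3_0; lia.
Qed.

End Cycles.

Section GoodCycleToSimpleCycle.
Variables (Q G : finType) (A : wps Q G).
Hypothesis HA : wf_wps A.

Local Notation cfg := (cfg Q G).
Local Notation run := (seq (edge Q G * cfg)).
Local Notation root := (q0 A, bot A).

Lemma stays_above_bot c (r : run) :
  is_run A c r -> prefix [:: bot A] c.1 -> stays_above [:: bot A] r.
Proof.
elim: r c => //= [[e c']] r IH [st q] /= [Hs Hr] /prefixP [t Est].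
suff Hc' : prefix [:: bot A] c'.1 by rewrite /stays_above /= Hc'; exact: IH c' Hr Hc'.
move: Hs => [Ee _ Htop _ ->]; subst st.
have [t0|t0] := eqVneq t [::]; last by rewrite apply_com_cat // prefix_prefix.
move: Htop; rewrite t0 /top /= => Htop.
have [_ /(_ Htop) no_pop] := HA Ee.
by case: (ecom e) no_pop => [_|/(_ erefl) []|z _] /=; rewrite ?eqxx.
Qed.

Lemma reachable_gr_reach (c : cfg) : reachable A c ->
  exists s t, c.1 = rcons s t /\ gr_reach A root (c.2, t).
Proof.
move=> [r [Hr <-]]; change (init A) with (rcons [::] (bot A), q0 A) in Hr |- *.
have Hmin : first_local_min (rcons [::] (bot A), q0 A) r.
  by apply: (stays_above_bot Hr); exact: prefix_refl.
have [ps [Hps ps_end _]] := run_to_walk Hr Hmin.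
have Hroot := gr_reach_walk (gr_refl A root) Hps; rewrite ps_end in Hroot.
have : prefix [:: bot A] (run_end (rcons [::] (bot A), q0 A) r).1.
  by apply: (run_end_all (P := fun c : cfg => prefix [:: bot A] c.1)) => //; exact: prefix_refl.
case/prefixP => t Et; exists (belast (bot A) t), (top A (run_end (rcons [::] (bot A), q0 A) r).1).
by split => //; rewrite Et /top /= -lastI.
Qed.

Lemma good_cycle_to_simple_cycle :
  has_reachable_good_cycle A -> has_reachable_positive_simple_cycle A.
Proof.
move=> [[st q] [r [Hreach [Hr Hpos Hmin end_q end_top]]]].
have [s [t [/= Est Hroot]]] := reachable_gr_reach Hreach; subst st.
have [ps [Hps ps_end ps_ge]] := run_to_walk Hr Hmin.
rewrite end_q end_top /top last_rcons in ps_end.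
have /andP [ps0 ps_pos] := walk_ge_positive Hpos ps_ge.
exact: positive_closed_walk_cycle ps0 (conj Hps ps_end) ps_pos Hroot.
Qed.

End GoodCycleToSimpleCycle.

Section SimpleCycleToGoodCycle.
Variables (Q G : finType) (A : wps Q G).

Local Notation vertex := (Q * G)%type.
Local Notation cfg := (cfg Q G).
Local Notation run := (seq (edge Q G * cfg)).
Local Notation root := (q0 A, bot A).

Lemma realize_edge u v x (s : seq G) (B : int) : gr_edge A u v x ->
  exists (r : run) s', [/\ is_run A (rcons s u.2, u.1) r, first_local_min (rcons s u.2, u.1) r,
     run_end (rcons s u.2, u.1) r = (rcons s' v.2, v.1),
     prefix (rcons s u.2) (rcons s' v.2) & ext_val B x <= run_weight A r].
Proof.
case: u v => q1 g [q2 g2] [[/= <- Hs]|[/= Ee ->]].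
- have [r [[Hr Hmin Hend] Hw]] : exists r, nd_path A q1 g q2 r /\ ext_val B x <= run_weight A r.
    case: x Hs => [unbounded|m [[r [Hr <-]] _]]; last by exists r.
    by have [r [Hr Hw]] := unbounded B; exists r.
  have base : rebase 1 s ([:: bot A; g], q1) = (rcons s g, q1) by rewrite /rebase /= cats1.
  exists (map (rebase_step 1 s) r), s; split; last by rewrite rebase_weight.
  + by rewrite -base; apply: (@rebase_run _ _ A [:: bot A] s g) => //; exact: prefix_refl.
  + by move: Hmin => /(@rebase_stays_above _ _ [:: bot A] s [:: g]); rewrite cats1.
  + by rewrite -base rebase_end Hend /rebase /= cats1.
  + exact: prefix_refl.
- set e := Edge q1 g q2 (Push g2).
  exists [:: (e, (rcons (rcons s g) g2, q2))], (rcons s g); split => //=.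
  + by split => //; split => //; rewrite /top last_rcons.
  + by rewrite /first_local_min /= prefix_rcons.
  + by rewrite prefix_rcons.
  + by rewrite run_weight_cons run_weight_nil addr0.
Qed.

Lemma reachable_cat c (r : run) : reachable A c -> is_run A c r -> reachable A (run_end c r).
Proof.
move=> [r0 [Hr0 <-]] Hr; exists (r0 ++ r); split; last by rewrite run_end_cat.
by rewrite is_run_cat.
Qed.

Lemma realize_reach u z : gr_reach A u z ->
  forall s, reachable A (rcons s u.2, u.1) -> exists s', reachable A (rcons s' z.2, z.1).
Proof.
elim=> [u' s Hu|u' v z' x Huv _ IH s Hu]; first by exists s.
have [r [s' [Hr _ Hend _ _]]] := realize_edge s 0 Huv.
by apply: (IH s'); rewrite -Hend; exact: reachable_cat.
Qed.

Section OnCycle.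
Variables (vs : seq vertex) (xs : seq ext).
Hypothesis Hcycle : simple_cycle A vs xs.

Local Notation start := (nth root vs 0).
Local Notation vertex_at i := (nth root vs (i %% size vs)).

Lemma cycle_start_reachable z v : v \in vs -> gr_reach A z v -> gr_reach A z start.
Proof.
case: Hcycle => vs0 _ _ Hedge v_in Hv.
suff reach_all j : gr_reach A z (vertex_at (index v vs + j)).
  by have := reach_all (size vs - index v vs)%N; rewrite subnKC ?modnn // ltnW ?index_mem.
elim: j => [|j IH]; first by rewrite addn0 modn_small ?nth_index ?index_mem.
have succ : (((index v vs + j) %% size vs).+1 %% size vs = (index v vs + j.+1) %% size vs)%N.
  by rewrite -addn1 modnDml addn1 addnS.
by have := Hedge _ (ltn_pmod (index v vs + j) vs0); rewrite succ => /(gr_reach_edge IH).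
Qed.

Lemma realize_cycle_prefix (s0 : seq G) (B : int) j : (j <= size vs)%N ->
  exists (r : run) s', [/\ is_run A (rcons s0 start.2, start.1) r,
    first_local_min (rcons s0 start.2, start.1) r,
    run_end (rcons s0 start.2, start.1) r = (rcons s' (vertex_at j).2, (vertex_at j).1),
    prefix (rcons s0 start.2) (rcons s' (vertex_at j).2) &
    \sum_(0 <= i < j) ext_val B (nth Omega xs i) <= run_weight A r].
Proof.
case: Hcycle => vs0 _ _ Hedge; elim: j => [|j IH] Hj.
  exists [::], s0; rewrite mod0n; split => //; rewrite ?prefix_refl //.
  by rewrite big_mkord big_ord0 run_weight_nil.
have [r [s' [Hr Hmin Hend Hpre Hw]]] := IH (ltnW Hj).
rewrite modn_small // in Hend Hpre.
have [r2 [s'' [Hr2 Hmin2 Hend2 Hpre2 Hw2]]] := realize_edge s' B (Hedge j Hj).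
exists (r ++ r2), s''; split.
- by rewrite is_run_cat Hend.
- rewrite first_local_minE stays_above_cat; apply/andP; split; first exact: Hmin.
  exact: stays_above_trans Hpre Hmin2.
- by rewrite run_end_cat Hend.
- exact: prefix_trans Hpre Hpre2.
- by rewrite big_nat_recr // run_weight_cat lerD.
Qed.

End OnCycle.

Lemma simple_cycle_to_good_cycle :
  has_reachable_positive_simple_cycle A -> has_reachable_good_cycle A.
Proof.
move=> [vs [xs [Hcycle Hpos [v v_in Hv]]]].
have init_reach : reachable A (rcons [::] (bot A), q0 A) by exists [::].
have [s0 Hreach] := realize_reach (cycle_start_reachable Hcycle v_in Hv) init_reach.
have [r [s' [Hr Hmin Hend _ Hw]]] :=
  realize_cycle_prefix Hcycle s0 (1 + \sum_(y <- xs) `|fin_part y|) (leqnn (size vs)).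
rewrite modnn in Hend.
exists (rcons s0 (nth root vs 0).2, (nth root vs 0).1), r; split => //; split => //.
- apply: lt_le_trans Hw; case: Hcycle => _ <- _ _.
  by rewrite -(big_nth Omega xpredT); exact: positive_cycle_ext_val.
- by rewrite Hend.
- by rewrite Hend /top !last_rcons.
Qed.

End SimpleCycleToGoodCycle.

Theorem lemma5 (Q G : finType) (A : wps Q G) (HA : wf_wps A) :
  has_reachable_good_cycle A <-> has_reachable_positive_simple_cycle A.
Proof.
split; [exact: good_cycle_to_simple_cycle | exact: simple_cycle_to_good_cycle].
Qed.
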